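(* Assume $\lfloor (M_1+\dots+M_n)/p\rfloor=n-1$ (ample reduction). For every $x=(x_1,\dots,x_n)\in\mathbb{F}_p^n$ with pairwise distinct coordinates and every $w\in\{c\in\mathbb{F}_p^n:\ \sum_im_ic_i=0\}$ there exists a unique $(c_1,\dots,c_{n-1})\in\mathbb{F}_p^{n-1}$ with $w=\sum_{l=1}^{n-1}c_lI^{[l]}(x)$.
   Context: $p,q$ are primes, $n$ a positive integer with $p>n\ge2$, $p>q$; $m_1,\dots,m_n$ are positive integers $<q$; $M_i$ is the least positive integer with $M_i\equiv -m_iq^{-1}\pmod p$. With $\Phi_p(x,z)=\prod_i(x-z_i)^{M_i}$ (here in an auxiliary variable, say $t$: $\Phi_p(t,z)=\prod_i(t-z_i)^{M_i}$), $I^{[l]}(z)\in\mathbb{F}_p[z_1,\dots,z_n]^n$ is the coefficient of $t^{lp-1}$ in $(\Phi_p/(t-z_1),\dots,\Phi_p/(t-z_n))$, and $I^{[l]}(x)$ denotes its value at $z=x$. *)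

From mathcomp Require Import all_boot all_algebra.
From mathcomp Require Import mpoly.
Unset Printing Implicit Defensive.
Import GRing.Theory.
Local Open Scope ring_scope.

(* M_i : the least positive integer congruent to -m_i q^{-1} mod p.
   The canonical representative r in [0,p) of -m_i/q in 'F_p is taken,
   replaced by p when r = 0 (the least positive integer in the class). *)
Definition Mexp (p q mi : nat) : nat :=
  let r := val (- (mi%:R : 'F_p) / (q%:R : 'F_p)) in
  if r == 0%N then p else r.

Definition Phi (p q n : nat) (m : 'I_n -> nat) : {poly {mpoly 'F_p[n]}} :=
  \prod_(j < n) ('X - ('X_j)%:P) ^+ (Mexp p q (m j)).

Definition Phi_div (p q n : nat) (m : 'I_n -> nat) (i : 'I_n) : {poly {mpoly 'F_p[n]}} :=
  \prod_(j < n) ('X - ('X_j)%:P) ^+ (Mexp p q (m j) - (i == j)).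

Definition Iz (p q n : nat) (m : 'I_n -> nat) (l : nat) (i : 'I_n) : {mpoly 'F_p[n]} :=
  (Phi_div p q n m i)`_(l * p - 1).

Definition Ix (p q n : nat) (m : 'I_n -> nat) (l : nat) (x : 'I_n -> 'F_p) : 'rV['F_p]_n :=
  \row_i (Iz p q n m l i).@[x].

(* With M_i the exponents of Phi and x the nodes, the rows I^{[l]}(x), 0 < l < n, are
   orthogonal to (M_i), hence to (m_i) = -q (M_i): the coefficient of t^{lp-1} in
   Phi' = sum_i M_i Phi/(t - x_i) is lp times a coefficient of Phi.  They span the whole
   hyperplane because every a with sum_i a_i I^{[l]}_i(x) = 0 for all l is proportional to
   (M_i).  Indeed G = sum_i a_i Phi/(t - x_i) then has no coefficient at any t^{kp-1}
   (for k >= n by degree), so G = H' with deg H <= deg Phi.  Let W = V^p, where V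
   interpolates H at the x_i; then W' = 0 and deg W <= (n-1)p <= deg Phi.  As G vanishes
   to order M_i - 1 at x_i and M_i < p, H - W vanishes there to order M_i, so
   H - W = b Phi and G = b Phi' = sum_i b M_i Phi/(t - x_i).  The Phi/(t - x_i) are
   linearly independent, whence a = b M. *)

From mathcomp Require Import all_boot all_algebra.
From mathcomp Require Import mpoly.
From mathcomp Require Import finfield zify ring.

Set Implicit Arguments.
Unset Strict Implicit.
Unset Printing Implicit Defensive.
Import GRing.Theory.
Local Open Scope ring_scope.

Lemma deriv_prod (R : comNzRingType) (I : eqType) (r : seq I) (G : I -> {poly R}) :
  uniq r -> (\prod_(j <- r) G j)^`() = \sum_(i <- r) (G i)^`() * \prod_(j <- r | j != i) G j.
Proof.
elim: r => [|a r IHr] /=; first by rewrite !big_nil derivC.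
case/andP=> a_notin_r r_uniq.
rewrite !big_cons derivM IHr // eqxx big_distrr /=; congr (_ + _).
  congr (_ * _); rewrite [RHS]big_seq_cond big_seq; apply: eq_bigl => j.
  by rewrite andb_idr // => j_in_r; apply: contraNneq a_notin_r => <-.
apply: eq_big_seq => i i_in_r; rewrite big_cons mulrCA.
by case: eqP => // a_eq_i; rewrite a_eq_i i_in_r in a_notin_r.
Qed.

Section FieldPoly.
Variable F : fieldType.

Lemma dvdp_exp_XsubC_deriv (c : F) (k : nat) (G : {poly F}) :
  (forall j, (0 < j <= k)%N -> j%:R != 0 :> F) ->
  ('X - c%:P) ^+ k %| G^`() -> ('X - c%:P) ^+ k.+1 %| G - (G.[c])%:P.
Proof.
move=> k_unit dvd_deriv; set s := 'X - c%:P.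
have s_neq0 : s != 0 by rewrite polyXsubC_eq0.
suff: forall j, (j <= k)%N -> s ^+ j.+1 %| G - (G.[c])%:P by apply.
elim=> [|j IHj] j_le_k.
  by rewrite expr1 dvdp_XsubCl /root !hornerE subrr.
have /dvdpP [Q GQ] := IHj (ltnW j_le_k).
have : s ^+ j.+1 %| (G - (G.[c])%:P)^`().
  by rewrite derivB derivC subr0; apply: dvdp_trans dvd_deriv; apply: dvdp_exp2l.
rewrite GQ derivM deriv_exp derivXsubC mul1r dvdp_addr; last by rewrite dvdp_mull.
rewrite /= mulrnAr -mulr_natr mulrAC exprS dvdp_mul2r ?expf_neq0 // mulr_natr.
rewrite -scaler_nat dvdpZr ?k_unit // => dvd_Q.
by rewrite -exprS [s ^+ j.+2]exprS dvdp_mul2r ?expf_neq0.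
Qed.

Lemma pchar_antiderivative (p : nat) (G : {poly F}) : p \in [pchar F] ->
  (forall k, (p %| k.+1)%N -> G`_k = 0) -> exists2 H, H^`() = G & (size H <= (size G).+1)%N.
Proof.
move=> pcharF G_coef; pose H := \poly_(k < (size G).+1) (if k is k'.+1 then G`_k' / k%:R else 0).
exists H; last exact: size_poly.
apply/polyP => k; rewrite coef_deriv coef_poly ltnS.
case: leqP => [G_le_k | _]; first by rewrite mul0rn nth_default.
have [k1_eq0 | k1_neq0] := eqVneq (k.+1%:R : F) 0.
  by rewrite G_coef ?mul0r ?mul0rn // (dvdn_pcharf pcharF) k1_eq0.
by rewrite -[LHS]mulr_natr divfK.
Qed.

Lemma dvdp_size_scale (P G : {poly F}) : P %| G -> (size G <= size P)%N ->
  exists b, G = b *: P.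
Proof.
case/dvdpP=> Q ->; have [->|Q_neq0] := eqVneq Q 0; first by exists 0; rewrite mul0r scale0r.
have [->|P_neq0] := eqVneq P 0; first by exists 0; rewrite mulr0 scaler0.
rewrite size_mul // => size_QP; have : (size Q <= 1)%N.
  rewrite -size_poly_gt0 in Q_neq0; move: Q_neq0 size_QP.
  by case: (size Q) => // k _; rewrite addSn /= -{2}[size P]add0n leq_add2r.
by move/size1_polyC ->; exists Q`_0; rewrite mul_polyC.
Qed.

End FieldPoly.

Section Nodes.
Variables (F : fieldType) (n : nat) (x : 'I_n -> F).

Definition Phi_at (M : 'I_n -> nat) : {poly F} := \prod_j ('X - (x j)%:P) ^+ M j.

Definition Phi_div_at (M : 'I_n -> nat) (i : 'I_n) : {poly F} :=
  Phi_at (fun j => M j - (i == j))%N.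

Definition lagrange_basis (i : 'I_n) : {poly F} := \prod_(j | j != i) ('X - (x j)%:P).

Lemma size_Phi_at M : size (Phi_at M) = (\sum_j M j).+1.
Proof.
rewrite size_prod => [|j _]; last by rewrite expf_neq0 // polyXsubC_eq0.
rewrite (eq_bigr (fun j => M j + 1)%N) => [|j _]; last by rewrite size_exp_XsubC addn1.
by rewrite big_split /= sum1_card card_ord -addSn addnK.
Qed.

Lemma Phi_div_atE M i :
  Phi_div_at M i = ('X - (x i)%:P) ^+ (M i).-1 * \prod_(j | j != i) ('X - (x j)%:P) ^+ M j.
Proof.
rewrite /Phi_div_at /Phi_at (bigD1 i) //= eqxx subn1; congr (_ * _).
by apply: eq_bigr => j /negPf; rewrite eq_sym => ->; rewrite subn0.
Qed.

Lemma size_Phi_div_at M i : (0 < M i)%N -> size (Phi_div_at M i) = \sum_j M j.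
Proof.
move=> M_gt0; rewrite size_Phi_at [in RHS](bigD1 i) //= (bigD1 i) //= eqxx subn1.
rewrite (eq_bigr M) => [|j /negPf]; last by rewrite eq_sym => ->; rewrite subn0.
by rewrite -addSn prednK.
Qed.

Lemma exp_XsubC_dvdp_Phi_div_at M i j : ('X - (x i)%:P) ^+ (M i).-1 %| Phi_div_at M j.
Proof.
rewrite /Phi_div_at /Phi_at (bigD1 i) //= dvdp_mulr // dvdp_exp2l //.
by case: (j == i); rewrite ?subn0 ?subn1 ?leq_pred.
Qed.

Lemma deriv_Phi_at M : (Phi_at M)^`() = \sum_i Phi_div_at M i *+ M i.
Proof.
rewrite deriv_prod ?index_enum_uniq //; apply: eq_bigr => i _.
by rewrite deriv_exp derivXsubC mul1r Phi_div_atE -mulrnAl.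
Qed.

Hypothesis x_inj : injective x.

Lemma lagrange_basis_eq0 i k : ((lagrange_basis i).[x k] == 0) = (k != i).
Proof.
rewrite /lagrange_basis horner_prod; have [->|k_neq_i] := eqVneq k i.
  apply/negbTE/prodf_neq0 => j j_neq_i; rewrite hornerXsubC subr_eq0.
  by apply: contra j_neq_i => /eqP /x_inj ->.
by rewrite (bigD1 k) //= hornerXsubC subrr mul0r eqxx.
Qed.

Lemma size_lagrange_basis i : size (lagrange_basis i) = n.
Proof.
rewrite size_prod => [|j _]; last by rewrite polyXsubC_eq0.
rewrite (eq_bigr (fun=> 2%N)) => [|j _]; last by rewrite size_XsubC.
rewrite sum_nat_const; have := cardC1 i; rewrite card_ord => ->.
by have := ltn_ord i; lia.
Qed.

Lemma exists_interpolation (v : 'I_n -> F) :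
  exists2 V : {poly F}, (size V <= n)%N & forall i, V.[x i] = v i.
Proof.
exists (\sum_i (v i / (lagrange_basis i).[x i]) *: lagrange_basis i).
  apply: (big_ind (fun P : {poly F} => size P <= n)%N) => [|P Q|i _].
  - by rewrite size_poly0.
  - by move=> sP sQ; apply: leq_trans (size_add _ _) _; rewrite geq_max sP sQ.
  - by apply: leq_trans (size_scale_leq _ _) _; rewrite size_lagrange_basis.
move=> k; rewrite horner_sum (bigD1 k) //= big1 ?addr0 => [|i i_neq_k].
  by rewrite hornerZ divfK // lagrange_basis_eq0 eqxx.
by apply/eqP; rewrite hornerZ mulf_eq0 lagrange_basis_eq0 [k == i]eq_sym i_neq_k orbT.
Qed.

Lemma Phi_div_at_lagrange M i : (forall j, 0 < M j)%N ->
  Phi_div_at M i = Phi_at (fun j => (M j).-1) * lagrange_basis i.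
Proof.
move=> M_gt0; rewrite /Phi_div_at /Phi_at /lagrange_basis.
rewrite [\prod_(j | j != i) _]big_mkcond -big_split /=.
apply: eq_bigr => j _; have [->|j_neq_i] := eqVneq j i; first by rewrite subn1 mulr1.
by rewrite subn0 -exprSr prednK.
Qed.

Lemma Phi_div_at_free M (c : 'I_n -> F) : (forall j, 0 < M j)%N ->
  \sum_i c i *: Phi_div_at M i = 0 -> forall i, c i = 0.
Proof.
move=> M_gt0 sum_eq0 k.
have Phi_neq0 : Phi_at (fun j => (M j).-1) != 0.
  by apply/prodf_neq0 => j _; rewrite expf_neq0 // polyXsubC_eq0.
have : Phi_at (fun j => (M j).-1) * \sum_i c i *: lagrange_basis i = 0.
  rewrite -[RHS]sum_eq0 big_distrr; apply: eq_bigr => i _.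
  by rewrite Phi_div_at_lagrange // scalerAr.
move/eqP; rewrite mulf_eq0 (negbTE Phi_neq0) /= => /eqP/(congr1 (horner^~ (x k))).
rewrite horner_sum hornerC (bigD1 k) //= big1 ?addr0 => [|i i_neq_k].
  by rewrite hornerZ => /eqP; rewrite mulf_eq0 lagrange_basis_eq0 eqxx orbF => /eqP.
by apply/eqP; rewrite hornerZ mulf_eq0 lagrange_basis_eq0 [k == i]eq_sym i_neq_k orbT.
Qed.

Lemma Phi_at_dvdp M G : (forall i, ('X - (x i)%:P) ^+ M i %| G) -> Phi_at M %| G.
Proof.
move=> dvdG; rewrite /Phi_at.
elim: (index_enum _) (index_enum_uniq 'I_n) => [|a r IHr] /=; first by rewrite big_nil dvd1p.
case/andP=> a_notin_r r_uniq; rewrite big_cons Gauss_dvdp ?dvdG ?IHr //.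
apply/coprimep_expl; rewrite coprimep_sym coprimep_XsubC rootE horner_prod prodf_seq_neq0.
apply/allP => j j_in_r; rewrite horner_exp hornerXsubC expf_neq0 // subr_eq0.
by apply: contraNneq a_notin_r => /x_inj ->.
Qed.

End Nodes.

Lemma Phi_div_at_coef_relation (F : fieldType) (p n : nat) (x : 'I_n -> F) M l :
  p \in [pchar F] -> (0 < l)%N ->
  \sum_i (M i)%:R * (Phi_div_at x M i)`_(l * p - 1) = 0.
Proof.
move=> pcharF l_gt0; have p_gt0 := prime_gt0 (pcharf_prime pcharF).
have lp_pred : (l * p - 1).+1 = (l * p)%N by rewrite subn1 prednK // muln_gt0 l_gt0.
have := congr1 (fun P : {poly F} => P`_(l * p - 1)) (deriv_Phi_at x M).
rewrite /= coef_deriv lp_pred mulrnA mulrn_pchar // coef_sum => zero_eq_coef.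
rewrite [RHS]zero_eq_coef.
by apply: eq_bigr => i _; rewrite coefMn mulr_natl.
Qed.

Lemma unique_row_combination (F : fieldType) (n : nat) (A : 'M[F]_(n.-1, n)) (v : 'rV_n) :
  v != 0 -> A *m v^T = 0 -> (forall a : 'rV_n, a *m A^T = 0 -> exists b, a = b *: v) ->
  forall w : 'rV_n, w *m v^T = 0 -> exists! c : 'rV_(n.-1), w = c *m A.
Proof.
move=> v_neq0 Av_eq0 kerA w wv_eq0.
have ker_sub_v : (kermx A^T <= v)%MS.
  apply/row_subP => r.
  have [b ->] : exists b, row r (kermx A^T) = b *: v.
    by apply: kerA; rewrite -row_mul mulmx_ker row0.
  exact: scalemx_sub.
have rankA : \rank A = n.-1.
  have := mxrankS ker_sub_v; rewrite mxrank_ker mxrank_tr rank_rV v_neq0.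
  have := rank_leq_row A; lia.
have rank_vT_ker : \rank (kermx v^T) = n.-1 by rewrite mxrank_ker mxrank_tr rank_rV v_neq0 subn1.
have A_sub_ker : (A <= kermx v^T)%MS by rewrite sub_kermx Av_eq0.
have ker_sub_A : (kermx v^T <= A)%MS.
  by have [_ <-] := mxrank_leqif_sup A_sub_ker; rewrite rankA rank_vT_ker.
have /submxP [c ->] : (w <= A)%MS by apply: submx_trans ker_sub_A; rewrite sub_kermx wv_eq0.
have A_free : row_free A by rewrite /row_free rankA.
by exists c; split=> // c' /esym /(row_free_inj A_free).
Qed.

Section PrimeField.
Variables (p : nat) (n : nat) (x : 'I_n -> 'F_p).
Hypotheses (p_prime : prime p) (x_inj : injective x).

Lemma pth_power_interpolation (v : 'I_n -> 'F_p) :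
  exists W : {poly 'F_p},
    [/\ W^`() = 0, (size W <= (n.-1 * p).+1)%N & forall i, W.[x i] = v i].
Proof.
have [V size_V V_x] := exists_interpolation x_inj v.
exists (V ^+ p); split.
- by rewrite deriv_exp -scaler_nat pchar_Fp_0 // scale0r.
- by apply: leq_trans (leqSpred _) _; rewrite size_exp ltnS leq_mul2r -!subn1 leq_sub2r ?orbT.
- by move=> i; rewrite horner_exp V_x -{2}(expf_card (v i)) card_Fp.
Qed.

Variable M : 'I_n -> nat.
Hypotheses (M_gt0 : forall i, (0 < M i)%N) (M_lt_p : forall i, (M i < p)%N).
Hypotheses (sumM_ge : (n.-1 * p <= \sum_i M i)%N) (sumM_lt : (\sum_i M i < n * p)%N).

Lemma Phi_div_at_coef_kernel (a : 'I_n -> 'F_p) :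
  (forall l, (0 < l < n)%N -> \sum_i a i * (Phi_div_at x M i)`_(l * p - 1) = 0) ->
  exists b, forall i, a i = b * (M i)%:R.
Proof.
move=> a_ker; set D := (\sum_i M i)%N; set G := \sum_i a i *: Phi_div_at x M i.
have coefG k : G`_k = \sum_i a i * (Phi_div_at x M i)`_k.
  by rewrite coef_sum; apply: eq_bigr => i _; rewrite coefZ.
have size_G : (size G <= D)%N.
  apply/leq_sizeP => k D_le_k; rewrite coefG big1 // => i _.
  by rewrite nth_default ?mulr0 // size_Phi_div_at.
have [H H_deriv size_H] : exists2 H, H^`() = G & (size H <= D.+1)%N.
  have G_coef_eq0 k : (p %| k.+1)%N -> G`_k = 0.
    case/dvdnP=> l k_eq; have k_pred : k = (l * p - 1)%N by rewrite -k_eq subn1.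
    have [l_lt_n | n_le_l] := ltnP l n.
      rewrite k_pred coefG a_ker // l_lt_n andbT lt0n.
      by apply: contra_eqN k_eq => /eqP ->.
    by apply: nth_default; apply: leq_trans size_G _; have := leq_mul n_le_l (leqnn p); lia.
  have [H H_deriv size_H] := pchar_antiderivative (pchar_Fp p_prime) G_coef_eq0.
  by exists H => //; apply: leq_trans size_H _.
have [W [W_deriv size_W W_x]] := pth_power_interpolation (fun i => H.[x i]).
have [b HW] : exists b, H - W = b *: Phi_at x M.
  apply: dvdp_size_scale; last first.
    rewrite size_Phi_at; apply: leq_trans (size_add _ _) _.
    by rewrite size_opp geq_max size_H (leq_trans size_W).
  apply: (Phi_at_dvdp x_inj) => i.
  have := @dvdp_exp_XsubC_deriv _ (x i) (M i).-1 (H - W).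
  rewrite prednK // !hornerE W_x subrr subr0; apply.
    move=> j /andP [j_gt0 j_lt]; rewrite -(dvdn_pcharf (pchar_Fp p_prime)).
    by apply: contraTN j_lt => /(dvdn_leq j_gt0); have := M_lt_p i; lia.
  rewrite derivB W_deriv subr0 H_deriv.
  apply: (big_ind (dvdp _)) => [|P Q|j _]; [exact: dvdp0 | exact: dvdp_add |].
  by rewrite -mul_polyC dvdp_mull ?exp_XsubC_dvdp_Phi_div_at.
exists b => i; apply/eqP; rewrite -subr_eq0; apply/eqP; move: i.
apply: (Phi_div_at_free x_inj M_gt0).
rewrite (eq_bigr (fun i => a i *: Phi_div_at x M i - b *: (Phi_div_at x M i *+ M i))) => [|i _].
  by rewrite sumrB -scaler_sumr -deriv_Phi_at -derivZ -HW derivB W_deriv subr0 H_deriv subrr.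
by rewrite scalerBl -scalerA scaler_nat.
Qed.

Definition coef_mx : 'M['F_p]_(n.-1, n) := \matrix_(l, i) (Phi_div_at x M i)`_(l.+1 * p - 1).

Lemma coef_mx_unique_comb (w : 'rV_n) :
  \sum_i (M i)%:R * w 0 i = 0 -> exists! c : 'rV_n.-1, w = c *m coef_mx.
Proof.
move=> w_orth; pose v : 'rV['F_p]_n := \row_i (M i)%:R.
apply: (@unique_row_combination _ _ _ v).
- have /andP [n_gt0 _] : (0 < n)%N && (0 < p)%N.
    by rewrite -muln_gt0 (leq_ltn_trans _ sumM_lt).
  apply/negP => /eqP/rowP/(_ (Ordinal n_gt0)); rewrite !mxE; apply/eqP.
  by rewrite -(dvdn_pcharf (pchar_Fp p_prime)) gtnNdvd.
- apply/matrixP => l j; rewrite !mxE.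
  rewrite -[RHS](Phi_div_at_coef_relation x M (pchar_Fp p_prime) (ltn0Sn l)).
  by apply: eq_bigr => i _; rewrite !mxE mulrC.
- move=> a aA_eq0; have [b a_eq] : exists b, forall i, a 0 i = b * (M i)%:R.
    apply: Phi_div_at_coef_kernel => l /andP [l_gt0 l_lt_n]; have l1_lt : (l.-1 < n.-1)%N by lia.
    have := congr1 (fun u : 'rV_n.-1 => u 0 (Ordinal l1_lt)) aA_eq0.
    rewrite !mxE => aA_l; rewrite -[RHS]aA_l.
    by apply: eq_bigr => i _; rewrite !mxE /= prednK.
  by exists b; apply/rowP => i; rewrite a_eq !mxE.
- by apply/rowP => i; rewrite !mxE -[RHS]w_orth; apply: eq_bigr => j _; rewrite !mxE mulrC.
Qed.

End PrimeField.

Lemma natr_Mexp (p q m : nat) : prime p -> (Mexp p q m)%:R = - m%:R / q%:R :> 'F_p.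
Proof.
move=> p_prime; rewrite /Mexp; case: eqP => [val_eq0 | _]; last exact: natr_Zp.
by rewrite pchar_Fp_0 // -[LHS]/(0%N%:R) -val_eq0 natr_Zp.
Qed.

Lemma Mexp_gt0 (p q m : nat) : prime p -> (0 < Mexp p q m)%N.
Proof.
by move=> p_prime; rewrite /Mexp; case: ifP => [_ | /negbT]; [exact: prime_gt0 | rewrite lt0n].
Qed.

Lemma Mexp_lt (p q m : nat) : prime p -> - m%:R / q%:R != 0 :> 'F_p -> (Mexp p q m < p)%N.
Proof.
move=> p_prime; rewrite -natr_Mexp // /Mexp.
case: ifP => [_ | _ _]; first by rewrite pchar_Fp_0 ?eqxx.
by rewrite -[X in (_ < X)%N](Fp_cast p_prime) ltn_ord.
Qed.

Lemma Ix_coef_mx (p q n : nat) (m : 'I_n -> nat) (x : 'I_n -> 'F_p) (c : 'rV_n.-1) :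
  \sum_(l < n.-1) c 0 l *: Ix p q n m l.+1 x = c *m coef_mx x (fun i => Mexp p q (m i)).
Proof.
rewrite mulmx_sum_row; apply: eq_bigr => l _; congr (_ *: _); apply/rowP => i.
rewrite !mxE /Iz -coef_map /Phi_div rmorph_prod.
apply: (congr1 (fun P : {poly 'F_p} => P`_(l.+1 * p - 1))); apply: eq_bigr => j _.
by rewrite rmorphXn /= map_polyXsubC; congr ((_ - _%:P) ^+ _); exact: mevalXU.
Qed.

Unset Implicit Arguments.

Theorem corollary7p7 (p q n : nat) (m : 'I_n -> nat)
  (hp : prime p) (hq : prime q) (hn : (2 <= n)%N) (hpn : (n < p)%N) (hpq : (q < p)%N)
  (hm : forall i, (0 < m i < q)%N)
  (ample : ((\sum_(i < n) Mexp p q (m i)) %/ p)%N = n.-1) :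
  forall x : 'I_n -> 'F_p, injective x ->
  forall w : 'rV['F_p]_n, \sum_(i < n) (m i)%:R * w 0 i = 0 ->
  exists! c : 'rV['F_p]_(n.-1),
    w = \sum_(l < n.-1) c 0 l *: Ix p q n m l.+1 x.
Proof.
move=> x x_inj w w_orth; set M := fun i => Mexp p q (m i).
have p_gt0 := prime_gt0 hp.
have natr_neq0 k : (0 < k < p)%N -> k%:R != 0 :> 'F_p.
  by case/andP=> k_gt0 k_lt_p; rewrite -(dvdn_pcharf (pchar_Fp hp)) gtnNdvd.
have q_neq0 : q%:R != 0 :> 'F_p by rewrite natr_neq0 ?prime_gt0.
have M_lt_p i : (M i < p)%N.
  have /andP [m_gt0 m_lt_q] := hm i.
  apply: (Mexp_lt hp); apply: mulf_neq0; last by rewrite invr_eq0.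
  by rewrite oppr_eq0 natr_neq0 // m_gt0 (ltn_trans m_lt_q hpq).
have sumM_ge : (n.-1 * p <= \sum_i M i)%N by rewrite -leq_divRL // ample.
have sumM_lt : (\sum_i M i < n * p)%N by rewrite -ltn_divLR // ample; lia.
have M_orth : \sum_i (M i)%:R * w 0 i = 0.
  have nq_neq0 : - q%:R != 0 :> 'F_p by rewrite oppr_eq0.
  apply: (mulfI nq_neq0); rewrite mulr0 -[RHS]w_orth mulr_sumr.
  by apply: eq_bigr => i _; rewrite natr_Mexp //; field.
have M_gt0 i : (0 < M i)%N := Mexp_gt0 q (m i) hp.
have [c [w_eq c_uniq]] := coef_mx_unique_comb hp x_inj M_gt0 M_lt_p sumM_ge sumM_lt M_orth.
by exists c; split=> [|c']; rewrite Ix_coef_mx // => /c_uniq.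
Qed.
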